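(* Let $N$ be a finite nonempty set, $p\notin N$ and $N'=N\cup\{p\}$. Let $\mathscr{C}=\{S_1,\dots,S_k\}$ be a minimal balanced collection on $N$ with (unique) balancing weights $(\lambda_{S_i})_{i\in[k]}$. Let $I\subseteq[k]$ satisfy $\lambda_I:=\sum_{i\in I}\lambda_{S_i}<1$. Then $$\mathscr{C}'=\{S_i\cup\{p\}\mid i\in I\}\cup\{S_i\mid i\in[k]\setminus I\}\cup\{\{p\}\}$$ is a minimal balanced collection on $N'$ (with balancing weights $\lambda_{S_i}$ for the sets coming from $S_i$ and $1-\lambda_I$ for $\{p\}$).
   Context: For $T\subseteq N$, $\mathbf{1}^T\in\mathbb{R}^N$ denotes the characteristic vector of $T$. A collection $\mathscr{B}$ of nonempty subsets of a finite set $N$ is balanced if there exist positive weights $(\lambda_S)_{S\in\mathscr{B}}$ (balancing weights) with $\sum_{S\in\mathscr{B}}\lambda_S\mathbf{1}^S=\mathbf{1}^N$. A balanced collection is minimal if it contains no balanced proper subcollection; equivalently, its system of balancing weights is unique. $[k]=\{1,\dots,k\}$. *)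

From HB Require Import structures.
From mathcomp Require Import all_boot all_order all_algebra.
From mathcomp Require Import reals.
Set Implicit Arguments. Unset Strict Implicit. Unset Printing Implicit Defensive.
Import Order.TTheory GRing.Theory Num.Theory.
Local Open Scope ring_scope.

Definition balancing_weights (R : realType) (T : finType) (N : {set T})
    (B : {set {set T}}) (lam : {set T} -> R) : Prop :=
  (forall S, S \in B -> 0 < lam S) /\
  (forall x : T, \sum_(S in B) lam S * (x \in S)%:R = (x \in N)%:R).

Definition balanced_on (R : realType) (T : finType) (N : {set T})
    (B : {set {set T}}) : Prop :=
  (forall S, S \in B -> S != set0 /\ S \subset N) /\
  exists lam : {set T} -> R, balancing_weights N B lam.

Definition minimal_balanced_on (R : realType) (T : finType) (N : {set T})
    (B : {set {set T}}) : Prop :=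
  balanced_on R N B /\ (forall B' : {set {set T}}, B' \proper B -> ~ balanced_on R N B').

From HB Require Import structures.
From mathcomp Require Import all_boot all_order all_algebra.
From mathcomp Require Import reals.
From mathcomp Require Import lra.
Import Order.TTheory GRing.Theory Num.Theory.
Local Open Scope ring_scope.
Set Implicit Arguments. Unset Strict Implicit.

(* Minimality makes the balancing weights of C unique: the difference of two
   systems is a null combination, and moving the positive weights along it
   until a first weight vanishes yields a balanced proper subcollection.
   If a subcollection B' of C' is balanced, then looking at the points of N
   its weights, restricted to the sets coming from C, balance C; by
   uniqueness every such set lies in B' with its old weight, and then the
   equation at p forces {p} into B' as well, since lambda_I < 1. *)

Lemma sum_subset_mkcond (V : nmodType) (X : finType) (A B : {set X})
    (F : X -> V) :
  B \subset A -> \sum_(Y in B) F Y = \sum_(Y in A) (if Y \in B then F Y else 0).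
Proof.
move=> BA; rewrite -big_mkcondr; apply: eq_bigl => Y.
by rewrite andb_idl // => /(subsetP BA).
Qed.

Lemma exists_boundary_shift (R : realFieldType) (I : finType)
    (lam e : I -> R) (i0 : I) :
  (forall j, 0 < lam j) -> e i0 < 0 ->
  exists t j0,
    (forall j, 0 <= lam j + t * e j) /\ lam j0 + t * e j0 = 0.
Proof.
move=> lam_gt0 e_i0.
pose r j := lam j / - e j.
have [j0 e_j0 r_min] := arg_minP r (e_i0 : [pred j | e j < 0] i0).
exists (r j0), j0; split => [j|]; last first.
  by rewrite /r invrN mulrN mulNr -mulrA mulVf ?mulr1 ?subrr ?lt_eqF.
have r_gt0 : 0 < r j0 by rewrite divr_gt0 ?oppr_gt0.
case: (ltP (e j) 0) => [e_j|e_j]; last first.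
  exact: addr_ge0 (ltW (lam_gt0 j)) (mulr_ge0 (ltW r_gt0) e_j).
have : r j0 * - e j <= lam j by rewrite -ler_pdivlMr ?oppr_gt0 ?r_min.
rewrite mulrN; lra.
Qed.

Section MinimalBalancedFamily.
Variables (R : realType) (T : finType) (N : {set T}) (k : nat).
Variable S : 'I_k -> {set T}.
Hypothesis S_inj : injective S.

Definition family_weight (w : 'I_k -> R) (X : {set T}) : R :=
  \sum_i w i * (X == S i)%:R.

Lemma family_weightE w j : family_weight w (S j) = w j.
Proof.
rewrite /family_weight (bigD1 j) //= eqxx mulr1 big1 ?addr0 // => i ij.
by rewrite (inj_eq S_inj) eq_sym (negbTE ij) mulr0.
Qed.

Lemma sum_family_image (P : {pred 'I_k}) (g : {set T} -> R) :
  \sum_(X in [set S i | i in P]) g X = \sum_(i in P) g (S i).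
Proof. by rewrite big_imset // => i j _ _ /S_inj. Qed.

Lemma balanced_family_support (w : 'I_k -> R) :
  (forall j, S j != set0 /\ S j \subset N) ->
  (forall j, 0 <= w j) ->
  (forall x, \sum_j w j * (x \in S j)%:R = (x \in N)%:R) ->
  balanced_on R N [set S j | j in [set j | 0 < w j]].
Proof.
move=> S_ok w_ge0 w_bal; split=> [_ /imsetP[j _ ->]|]; first exact: S_ok.
exists (family_weight w); split=> [X /imsetP[j w_j ->]|x].
  by rewrite family_weightE; rewrite inE in w_j.
rewrite sum_family_image -w_bal [RHS](bigID [in [set j | 0 < w j]]) /=.
rewrite [X in _ + X]big1 ?addr0 => [|j]; last first.
  rewrite inE -leNgt => w_le0.
  have w_j0 : w j = 0 by apply/eqP; rewrite eq_le w_le0 w_ge0.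
  by rewrite w_j0 mul0r.
by apply: eq_bigr => j _; rewrite family_weightE.
Qed.

Lemma null_combination_neg (e : 'I_k -> R) (i : 'I_k) :
  (forall j, S j != set0) ->
  (forall x, \sum_j e j * (x \in S j)%:R = 0) ->
  e i != 0 -> exists j, e j < 0.
Proof.
move=> S_n0 e_null e_i; apply/existsP/contraT.
rewrite negb_exists => /forallP e_ge0.
have {}e_ge0 j : 0 <= e j by rewrite leNgt e_ge0.
have [x x_Si] := set0Pn _ (S_n0 i).
have := e_null x; rewrite (bigD1 i) //= x_Si mulr1 => /eqP.
rewrite paddr_eq0 ?sumr_ge0 // => [/andP[/eqP e_i0 _]|j _].
  by rewrite e_i0 eqxx in e_i.
by rewrite mulr_ge0.
Qed.

Lemma minimal_balanced_weights_unique (lam nu : 'I_k -> R) :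
  minimal_balanced_on R N [set S i | i in 'I_k] ->
  (forall i, 0 < lam i) ->
  (forall x, \sum_i lam i * (x \in S i)%:R = (x \in N)%:R) ->
  (forall x, \sum_i nu i * (x \in S i)%:R = (x \in N)%:R) ->
  nu =1 lam.
Proof.
move=> [[S_ok _] C_min] lam_gt0 lam_bal nu_bal i.
have {}S_ok j : S j != set0 /\ S j \subset N by apply/S_ok/imset_f.
apply/eqP/negPn/negP => nu_neq_lam.
pose e j := nu j - lam j.
have e_null x : \sum_j e j * (x \in S j)%:R = 0.
  under eq_bigr do rewrite mulrBl.
  by rewrite sumrB lam_bal nu_bal subrr.
have [i0 e_i0] : exists j, e j < 0.
  apply: (null_combination_neg (i := i)) => //; last by rewrite subr_eq0.
  by move=> j; case: (S_ok j).
have [t [j0 [w_ge0 w_j0]]] := exists_boundary_shift lam_gt0 e_i0.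
pose w j := lam j + t * e j.
have w_bal x : \sum_j w j * (x \in S j)%:R = (x \in N)%:R.
  under eq_bigr do rewrite mulrDl -mulrA.
  by rewrite big_split /= -mulr_sumr e_null mulr0 addr0 lam_bal.
apply: (C_min _ _ (balanced_family_support S_ok w_ge0 w_bal)).
apply/properP; split; first by apply/subsetP => _ /imsetP[j _ ->]; rewrite imset_f.
exists (S j0); first exact: imset_f.
apply/imsetP => -[j]; rewrite inE => w_j /S_inj j0j.
by move: w_j; rewrite -j0j w_j0 ltxx.
Qed.

End MinimalBalancedFamily.

Section AddPoint.
Variables (R : realType) (T : finType) (N : {set T}) (p : T) (k : nat).
Variables (S : 'I_k -> {set T}) (I : {set 'I_k}).
Hypothesis S_inj : injective S.
Hypothesis S_ok : forall i, S i != set0 /\ S i \subset N.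
Hypothesis p_notin_N : p \notin N.

Definition add_point (i : 'I_k) : {set T} :=
  if i \in I then S i :|: [set p] else S i.

Lemma p_notin_S i : p \notin S i.
Proof. by apply: contra p_notin_N; apply/subsetP; case: (S_ok i). Qed.

Lemma mem_add_point_p i : (p \in add_point i) = (i \in I).
Proof.
by rewrite /add_point; case: ifP; rewrite ?inE ?eqxx ?orbT // (negbTE (p_notin_S i)).
Qed.

Lemma mem_add_point x i : x != p -> (x \in add_point i) = (x \in S i).
Proof. by rewrite /add_point => x_p; case: ifP; rewrite // !inE (negbTE x_p) orbF. Qed.

Lemma add_point_inj : injective add_point.
Proof.
move=> i j eq_ij; apply: S_inj; apply/setP => x.
case: (eqVneq x p) => [->|x_p]; first by rewrite !(negbTE (p_notin_S _)).
by rewrite -!(mem_add_point _ x_p) eq_ij.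
Qed.

Lemma subset_add_point i : S i \subset add_point i.
Proof. by rewrite /add_point; case: ifP; rewrite ?subsetUl. Qed.

Lemma add_point_neq1 i : add_point i != [set p].
Proof.
have [x x_Si] := set0Pn _ (proj1 (S_ok i)).
apply: contraNneq (p_notin_S i) => Xi_p.
by move: (subsetP (subset_add_point i) x x_Si); rewrite Xi_p inE => /eqP <-.
Qed.

Lemma add_point_collection_sub Y :
  Y \in [set p] |: [set add_point i | i in 'I_k] -> Y != set0 /\ Y \subset p |: N.
Proof.
case/setU1P=> [->|/imsetP[i _ ->]].
  by split; [apply/set0Pn; exists p; rewrite inE | rewrite sub1set setU11].
split; first by apply: subset_neq0 (subset_add_point i) _; case: (S_ok i).
rewrite /add_point setUC; case: ifP => _; first by rewrite setUS; case: (S_ok i).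
by rewrite (subset_trans (proj2 (S_ok i))) ?subsetUr.
Qed.

Lemma add_point_collectionE :
  [set S i :|: [set p] | i in I] :|: [set S i | i in ~: I] :|: [set [set p]]
  = [set p] |: [set add_point i | i in 'I_k].
Proof.
apply/setP => Y; rewrite !inE orbC; congr (_ || _); apply/idP/imsetP.
  case/orP => /imsetP[i i_I ->]; exists i => //; rewrite /add_point.
    by rewrite i_I.
  by rewrite inE in i_I; rewrite (negbTE i_I).
move=> [i _ ->]; rewrite /add_point; case: ifP => i_I.
  by rewrite (imset_f (fun i => S i :|: [set p])).
by rewrite (imset_f S) ?orbT // inE i_I.
Qed.

Lemma sum_add_point_collection (g : {set T} -> R) :
  \sum_(Y in [set p] |: [set add_point i | i in 'I_k]) g Y
  = g [set p] + \sum_i g (add_point i).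
Proof.
rewrite big_setU1 /= ?big_imset // => [i j _ _ /add_point_inj //|].
by apply/imsetP => -[i _ /eqP]; rewrite eq_sym (negbTE (add_point_neq1 i)).
Qed.

Section AddPointWeights.
Variable lam : 'I_k -> R.
Hypothesis lam_gt0 : forall i, 0 < lam i.
Hypothesis lam_bal : forall x, \sum_i lam i * (x \in S i)%:R = (x \in N)%:R.
Hypothesis lamI_lt1 : \sum_(i in I) lam i < 1.

Definition add_point_weight (X : {set T}) : R :=
  \sum_i lam i *
     (((i \in I) && (X == S i :|: [set p])) || ((i \notin I) && (X == S i)))%:R
  + (1 - \sum_(i in I) lam i) * (X == [set p])%:R.

Lemma add_point_weightE X :
  add_point_weight X = family_weight add_point lam X
                       + (1 - \sum_(i in I) lam i) * (X == [set p])%:R.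
Proof.
congr (_ + _); apply: eq_bigr => i _; rewrite /add_point.
by case: (i \in I); rewrite /= ?andbT ?andbF ?orbF.
Qed.

Lemma add_point_weight_add_point i : add_point_weight (add_point i) = lam i.
Proof.
by rewrite add_point_weightE family_weightE ?(negbTE (add_point_neq1 i)) ?mulr0
  ?addr0 //; apply: add_point_inj.
Qed.

Lemma add_point_weight1 : add_point_weight [set p] = 1 - \sum_(i in I) lam i.
Proof.
rewrite add_point_weightE eqxx mulr1 /family_weight big1 ?add0r // => i _.
by rewrite eq_sym (negbTE (add_point_neq1 i)) mulr0.
Qed.

Lemma sum_lam_mem_p : \sum_i lam i * (p \in add_point i)%:R = \sum_(i in I) lam i.
Proof.
rewrite [RHS]big_mkcond; apply: eq_bigr => i _.
by rewrite mem_add_point_p; case: (i \in I); rewrite ?mulr1 ?mulr0.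
Qed.

Lemma add_point_balancing :
  balancing_weights (p |: N) ([set p] |: [set add_point i | i in 'I_k])
    add_point_weight.
Proof.
split=> [_ /setU1P[->|/imsetP[i _ ->]]|x].
- by rewrite add_point_weight1 subr_gt0.
- by rewrite add_point_weight_add_point.
rewrite sum_add_point_collection.
under eq_bigr do rewrite add_point_weight_add_point.
rewrite add_point_weight1 !inE.
have [->|x_p] := eqVneq x p; first by rewrite sum_lam_mem_p mulr1 subrK.
under eq_bigr do rewrite mem_add_point //.
by rewrite lam_bal mulr0 add0r.
Qed.

Lemma add_point_minimal :
  minimal_balanced_on R N [set S i | i in 'I_k] ->
  forall B' : {set {set T}}, B' \proper [set p] |: [set add_point i | i in 'I_k] ->
  ~ balanced_on R (p |: N) B'.
Proof.
move=> C_min B' /properP[B'_sub [Z Z_C Z_B']] [_ [mu [_ mu_bal]]].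
pose nu i := if add_point i \in B' then mu (add_point i) else 0.
pose mu_p := if [set p] \in B' then mu [set p] else 0.
have cover x :
    mu_p * (x == p)%:R + \sum_i nu i * (x \in add_point i)%:R = (x \in p |: N)%:R.
  rewrite -mu_bal (sum_subset_mkcond _ B'_sub) sum_add_point_collection inE.
  rewrite /mu_p /nu.
  by congr (_ + _); [|apply: eq_bigr => i _]; case: ifP; rewrite ?mul0r.
have nu_bal x : \sum_i nu i * (x \in S i)%:R = (x \in N)%:R.
  have [->|x_p] := eqVneq x p.
    rewrite (negbTE p_notin_N) big1 // => i _.
    by rewrite (negbTE (p_notin_S i)) mulr0.
  have := cover x; rewrite (negbTE x_p) mulr0 add0r in_setU1 (negbTE x_p) => <-.
  by apply: eq_bigr => i _; rewrite mem_add_point.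
have nu_lam := minimal_balanced_weights_unique S_inj C_min lam_gt0 lam_bal nu_bal.
have add_point_in_B' i : add_point i \in B'.
  apply: contraTT (lam_gt0 i) => not_in; rewrite -nu_lam /nu (negbTE not_in).
  by rewrite ltxx.
have p_notin_B' : [set p] \notin B'.
  by move: Z_C Z_B'; case/setU1P=> [->//|/imsetP[i _ ->]]; rewrite add_point_in_B'.
have := cover p; rewrite /mu_p (negbTE p_notin_B') mul0r add0r setU11.
under eq_bigr do rewrite nu_lam.
by rewrite sum_lam_mem_p => sumI_1; move: lamI_lt1; rewrite sumI_1 ltxx.
Qed.

End AddPointWeights.

End AddPoint.

Theorem lemma4p2 (R : realType) (T : finType) (N : {set T}) (p : T)
  (k : nat) (S : 'I_k -> {set T}) (lam : 'I_k -> R) (I : {set 'I_k}) :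
  N != set0 -> p \notin N ->
  injective S ->
  minimal_balanced_on R N [set S i | i in 'I_k] ->
  (forall i, 0 < lam i) ->
  (forall x : T, \sum_(i < k) lam i * (x \in S i)%:R = (x \in N)%:R) ->
  \sum_(i in I) lam i < 1 ->
  let C' := [set S i :|: [set p] | i in I] :|: [set S i | i in ~: I]
            :|: [set [set p]] in
  let lam' := fun X : {set T} =>
     \sum_(i < k) lam i *
        (((i \in I) && (X == S i :|: [set p])) ||
         ((i \notin I) && (X == S i)))%:R
     + (1 - \sum_(i in I) lam i) * (X == [set p])%:R in
  minimal_balanced_on R (p |: N) C' /\ balancing_weights (p |: N) C' lam'.
Proof.
move=> _ p_notin_N S_inj C_min lam_gt0 lam_bal lamI_lt1 C' lam'.
have S_ok i : S i != set0 /\ S i \subset N.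
  by case: C_min => -[S_ok _] _; apply/S_ok/imset_f.
rewrite /C' add_point_collectionE.
have lam'_bal : balancing_weights (p |: N) _ lam' :=
  add_point_balancing S_inj S_ok p_notin_N lam_gt0 lam_bal lamI_lt1.
split=> //; split; last exact: add_point_minimal.
by split; [exact: add_point_collection_sub | exists lam'].
Qed.
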